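(* Let $N\in\mathbb Z$, let $q_0,\dots,q_{T-1}\in\mathbb Z$, and let $Q_0,\dots,Q_{T-1}\in\mathbb Q$ satisfy $Q_i-Q_j\notin\mathbb Z$ for all $i\neq j$. Then the diagonal map $f\mapsto(f,\dots,f)$ induces an isomorphism of vector spaces $$\mathbb C[z,z^{-1}]\Big/\bigcap_{s=0}^{T-1}O(N,Q_s,q_s;z)\ \xrightarrow{\ \sim\ }\ \bigoplus_{s=0}^{T-1}\mathbb C[z,z^{-1}]/O(N,Q_s,q_s;z).$$
   Context: $T$ is a positive integer. For $N,q\in\mathbb Z$ and $Q\in\mathbb Q$, $O(N,Q,q;z)$ is the subspace of $\mathbb C[z,z^{-1}]$ spanned by the monomials $z^i$ with $i\ge N+1$ together with the Laurent polynomials $\sum_{i=0}^{N-q-j}\binom Qi z^{i+q+j}$ for $j=0,-1,-2,\dots$. *)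

(* Laurent polynomials C[z,z^-1] are represented by their
   coefficient functions int -> algC (with finite support). *)
From HB Require Import structures.
From mathcomp Require Import all_boot all_order all_algebra all_field.
Set Implicit Arguments. Unset Strict Implicit. Unset Printing Implicit Defensive.
Import Order.TTheory GRing.Theory Num.Theory.
Local Open Scope ring_scope.

Definition laurent := int -> algC.

Definition is_laurent (f : laurent) : Prop :=
  exists M : nat, forall e : int, (M < `|e|)%N -> f e = 0.

Definition mono (i : int) : laurent := fun e => if e == i then 1 else 0.

Definition binomQ (Q : rat) (i : nat) : algC :=
  ratr ((\prod_(k < i) (Q - k%:R)) / (i`!)%:R).

Definition gpoly (N : int) (Q : rat) (q j : int) : laurent := fun e =>
  if (0 <= N - q - j)%R then
    \sum_(i < (absz (N - q - j)%R).+1) binomQ Q i * mono (i%:Z + q + j) e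
  else 0.

Definition isGenO (N : int) (Q : rat) (q : int) (g : laurent) : Prop :=
  (exists i : int, (N + 1 <= i)%R /\ g =1 mono i) \/
  (exists j : int, j <= 0 /\ g =1 gpoly N Q q j).

(* f lies in O(N,Q,q;z) = linear span of the family above *)
Definition inO (N : int) (Q : rat) (q : int) (f : laurent) : Prop :=
  exists (n : nat) (c : nat -> algC) (g : nat -> laurent),
    (forall k, (k < n)%N -> isGenO N Q q (g k)) /\
    (forall e, f e = \sum_(k < n) c k * g k e).

Definition lsub (f g : laurent) : laurent := fun e => f e - g e.

Definition inBigcapO (T : nat) (N : int) (Q : 'I_T -> rat) (q : 'I_T -> int)
  (f : laurent) : Prop := forall s : 'I_T, inO N (Q s) (q s) f.

From HB Require Import structures.
From mathcomp Require Import all_boot all_order all_algebra all_field.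
From mathcomp Require Import zify ring.
Set Implicit Arguments. Unset Strict Implicit. Unset Printing Implicit Defensive.
Import Order.TTheory GRing.Theory Num.Theory.
Local Open Scope ring_scope.

(* Well-definedness and injectivity are immediate: f - g lies in the
   intersection iff it lies in every O_s.  Surjectivity is the content.

   1. O(N,Q,q;z) is described by linear functionals: pairing the coefficients
      h(z^{N-n}) with the Toeplitz rows n |-> binom(-Q, n-j) inverts the matrix
      of the generators g_j, by the Vandermonde identity
      sum_i binom(a,i) binom(-a,m-i) = [m = 0].  Hence a Laurent polynomial
      whose dual coefficients j < N - q vanish lies in O (inO_of_dual_vanish).
   2. For parameters a_s pairwise incongruent modulo Z, the rows
      n |-> binom(a_s, n-j) are linearly independent (binseries_indep): the
      difference operator (n+1)E + (n-g) acts on binomial series by a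
      bidiagonal map on coefficients, invertible iff a - g is not an integer;
      the choices g = a_last + i annihilate the last family and keep the
      others intact, so induction on the number of families applies.
   3. Surjectivity then reduces to a finite, solvable linear system for the
      coefficients of f on a window [N-W, N] (diagonal_surjective). *)

Definition binC (x : algC) (i : nat) : algC :=
  (\prod_(k < i) (x - k%:R)) / (i`!)%:R.

Lemma binC0 (x : algC) : binC x 0 = 1.
Proof. by rewrite /binC big_ord0 fact0 divr1. Qed.

Lemma binCS (x : algC) (i : nat) :
  (i.+1)%:R * binC x i.+1 = (x - i%:R) * binC x i.
Proof.
rewrite /binC big_ord_recr /= factS natrM.
have nz_Si : (i.+1)%:R != 0 :> algC by rewrite pnatr_eq0.
have nz_fact : (i`!)%:R != 0 :> algC by rewrite pnatr_eq0 -lt0n fact_gt0.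
by field; rewrite ?nz_Si ?nz_fact //= addrC natr1 pnatr_eq0.
Qed.

Lemma binomQE (Q : rat) (i : nat) : binomQ Q i = binC (ratr Q) i.
Proof.
rewrite /binomQ /binC fmorph_div rmorph_prod rmorph_nat.
congr (_ / _); apply: eq_bigr => k _.
by rewrite rmorphB rmorph_nat.
Qed.

Definition binZ (x : algC) (m : int) : algC :=
  if m is Posz n then binC x n else 0.

Lemma binZ_neg (x : algC) (m : int) : m < 0 -> binZ x m = 0.
Proof. by case: m. Qed.

Lemma binZS (x : algC) (m : int) :
  (m + 1)%:~R * binZ x (m + 1) = (x - m%:~R) * binZ x m.
Proof.
case: m => [n|[|n]].
- have -> : Posz n + 1 = Posz n.+1 by rewrite -addn1.
  by rewrite /= binCS.
- by rewrite mul0r /= mulr0.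
- have -> : Negz n.+1 + 1 = Negz n by rewrite NegzE; lia.
  by rewrite /= !mulr0.
Qed.

Definition vandermonde (a b : algC) (m : nat) : algC :=
  \sum_(i < m.+1) binC a i * binC b (m - i).

(* It satisfies the recurrence of binom(a+b, m); this is the Vandermonde identity
   in the form needed below, without dividing by factorials. *)
Lemma vandermondeS (a b : algC) (m : nat) :
  (m.+1)%:R * vandermonde a b m.+1 = (a + b - m%:R) * vandermonde a b m.
Proof.
rewrite /vandermonde mulr_sumr.
have -> : \sum_(i < m.+2) (m.+1)%:R * (binC a i * binC b (m.+1 - i)) =
   \sum_(i < m.+2) (i%:R * binC a i * binC b (m.+1 - i)) +
   \sum_(i < m.+2) ((m.+1 - i)%:R * binC a i * binC b (m.+1 - i)).
  rewrite -big_split; apply: eq_bigr => i _ /=.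
  have hi : (i <= m.+1)%N by rewrite -ltnS.
  rewrite -{1}(subnKC hi) natrD; ring.
rewrite [X in X + _]big_ord_recl [X in _ + X]big_ord_recr /= subnn !mul0r.
rewrite !add0r addr0 mulr_sumr -big_split; apply: eq_bigr => i _ /=.
rewrite /bump /= add1n subSS binCS.
have hi : (i <= m)%N by rewrite -ltnS.
rewrite subSn // [X in _ + X]mulrAC binCS natrB //; ring.
Qed.

Lemma vandermonde_opp (a : algC) (m : nat) :
  vandermonde a (- a) m = (m == 0)%:R.
Proof.
elim: m => [|m IH]; first by rewrite /vandermonde big_ord1 subnn !binC0 mulr1.
have : (m.+1)%:R * vandermonde a (- a) m.+1 = 0.
  rewrite vandermondeS IH addrN sub0r.
  by case: m {IH} => [|m] /=; rewrite ?oppr0 ?mul0r ?mulr0.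
by move/eqP; rewrite mulf_eq0 pnatr_eq0 /= => /eqP.
Qed.

(* The same inversion, written as the matrix product of the upper triangular
   Toeplitz matrices (binom(-x, n-j))_{n,j} and (binom(x, j-p))_{j,p}
   truncated to indices below W+1. *)
Lemma binZ_inverse (x : algC) (n p W : nat) : (n < W.+1)%N ->
  \sum_(j < W.+1)
     (if (p <= j)%N then binZ (- x) (n%:Z - j%:Z) * binC x (j - p) else 0)
  = (n == p)%:R.
Proof.
move=> hn.
case: (ltnP n p) => hnp.
  rewrite big1 ?ltn_eqF // => j _; case: ifP => // hpj.
  by rewrite binZ_neg ?mul0r // subr_lt0 ltz_nat (leq_trans hnp).
pose F j := if (p <= j)%N then binZ (- x) (n%:Z - j%:Z) * binC x (j - p) else 0.
rewrite -(big_mkord xpredT F).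
rewrite (big_cat_nat _ (n := p)) //=; last exact: leq_trans hnp (ltnW hn).
rewrite big_nat_cond big1 ?add0r; last first.
  by move=> j /andP [/andP [_ hj] _]; rewrite /F leqNgt hj.
rewrite (big_cat_nat _ (n := n.+1)) //=; last exact: leqW.
rewrite [X in _ + X]big_nat_cond [X in _ + X]big1 ?addr0; last first.
  move=> j /andP [/andP [hj _] _]; rewrite /F; case: ifP => // _.
  by rewrite binZ_neg ?mul0r // subr_lt0 ltz_nat.
rewrite -{1}(add0n p) big_addn subSn // big_mkord.
have -> : (n == p) = (n - p == 0)%N by rewrite subn_eq0 eqn_leq hnp andbT.
rewrite -(vandermonde_opp x (n - p)); apply: eq_bigr => i _.
rewrite /F leq_addl addnK mulrC.
have -> : n%:Z - (i + p)%N%:Z = Posz (n - p - i)%N by have := ltn_ord i; lia.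
by [].
Qed.

Definition supported_below (d : nat) (c : nat -> algC) : Prop :=
  forall j, (d <= j)%N -> c j = 0.

Definition binseries (d : nat) (c : nat -> algC) (a : algC) (n : nat) : algC :=
  \sum_(j < d) c j * binZ a (n%:Z - j%:Z).

Lemma binseries0 (d : nat) (c : nat -> algC) (a : algC) (n : nat) :
  (forall j, c j = 0) -> binseries d c a n = 0.
Proof. by move=> c0; rewrite /binseries big1 // => j _; rewrite c0 mul0r. Qed.

(* Action of the difference operator u |-> (n+1) u(n+1) + (n-g) u(n) on the
   coefficients of a binomial series (see binseries_shift). *)
Definition shift_coef (a g : algC) (c : nat -> algC) (j : nat) : algC :=
  (j%:R + a - g) * c j + (j.+1)%:R * c j.+1.

Lemma sum_ord_shift (F : nat -> algC) (d : nat) : F 0%N = 0 -> F d = 0 ->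
  \sum_(j < d) F j.+1 = \sum_(j < d) F j.
Proof.
move=> F0 Fd.
have := @big_ord_recl _ 0 +%R d (fun j : 'I_d.+1 => F j).
rewrite big_ord_recr /= F0 Fd add0r addr0 => ->.
by apply: eq_bigr.
Qed.

Lemma binseries_shift (d : nat) (c : nat -> algC) (a g : algC) (n : nat) :
  supported_below d c ->
  (n.+1)%:R * binseries d c a n.+1 + (n%:R - g) * binseries d c a n =
  binseries d (shift_coef a g c) a n.
Proof.
move=> hc; rewrite /binseries /shift_coef !mulr_sumr -big_split /=.
have termE (j : 'I_d) : (n.+1)%:R * (c j * binZ a (n.+1%:Z - j%:Z)) +
     (n%:R - g) * (c j * binZ a (n%:Z - j%:Z)) =
   (j%:R + a - g) * c j * binZ a (n%:Z - j%:Z) +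
   j%:R * c j * binZ a (n.+1%:Z - j%:Z).
  have := binZS a (n%:Z - j%:Z).
  have -> : n%:Z - j%:Z + 1 = n.+1%:Z - j%:Z by lia.
  rewrite !intrD !intrN /= => rec.
  have -> : (n.+1)%:R * (c j * binZ a (n.+1%:Z - j%:Z)) =
     c j * ((n.+1%:R - j%:R) * binZ a (n.+1%:Z - j%:Z))
     + j%:R * c j * binZ a (n.+1%:Z - j%:Z) by ring.
  rewrite rec; ring.
rewrite (eq_bigr _ (fun j _ => termE j)) big_split /=.
under [X in _ = X]eq_bigr do rewrite mulrDl.
rewrite big_split /=; congr (_ + _).
have := @sum_ord_shift (fun j => j%:R * c j * binZ a (n.+1%:Z - j%:Z)) d.
rewrite !mul0r hc // mulr0 mul0r => /(_ erefl erefl) <-.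
by apply: eq_bigr => j _; congr (_ * _ * binZ a _); lia.
Qed.

Lemma shift_coef_supported (d : nat) (a g : algC) (c : nat -> algC) :
  supported_below d c -> supported_below d (shift_coef a g c).
Proof. by move=> hc j hj; rewrite /shift_coef !hc ?mulr0 ?addr0 // ltnW. Qed.

Lemma shift_coef_inj (d : nat) (a g : algC) (c : nat -> algC) :
  (forall z : int, a - g != z%:~R) -> supported_below d c ->
  (forall j, shift_coef a g c j = 0) -> forall j, c j = 0.
Proof.
move=> hz hc hG.
suff vanish k j : (d <= j + k)%N -> c j = 0.
  by move=> j; apply: (vanish d); rewrite leq_addl.
elim: k j => [|k IH] j hj; first by apply: hc; rewrite -(addn0 j).
have cS : c j.+1 = 0 by apply: IH; rewrite addSn -addnS.
have := hG j; rewrite /shift_coef cS mulr0 addr0 => /eqP; rewrite mulf_eq0.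
case/orP => [/eqP h|/eqP //].
have := hz (- (j%:Z)); rewrite intrN.
have -> : a - g = - j%:R by rewrite -[RHS]add0r -h; ring.
by rewrite eqxx.
Qed.

Fixpoint shift_iter (a : algC) (g : nat -> algC) (k : nat) (c : nat -> algC)
  : nat -> algC :=
  if k is k'.+1 then shift_iter a g k' (shift_coef a (g k') c) else c.

Lemma shift_iter_supported (d : nat) (a : algC) (g : nat -> algC) (k : nat)
  (c : nat -> algC) :
  supported_below d c -> supported_below d (shift_iter a g k c).
Proof.
elim: k c => [|k IH] c hc //=.
exact/IH/shift_coef_supported.
Qed.

(* With the shifts g i = a + i, i < k, the iterate kills every sequence
   supported below k: the operators annihilate binom(a, n - j), j < k. *)
Lemma shift_iter_kill (a : algC) (g : nat -> algC) (k : nat) (c : nat -> algC) :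
  (forall i, g i = a + i%:R) -> supported_below k c ->
  forall j, shift_iter a g k c j = 0.
Proof.
move=> hg; elim: k c => [|k IH] c hc /=; first by move=> j; apply: hc.
apply: IH => j hj; rewrite /shift_coef hg.
case: (ltngtP j k) => hjk; first by rewrite ltnNge hj in hjk.
  by rewrite !hc ?mulr0 ?addr0 // ltnW.
by rewrite hjk (hc k.+1) // mulr0 addr0 opprD addrA addrK subrr mul0r.
Qed.

Lemma shift_iter_inj (d : nat) (a : algC) (g : nat -> algC) (k : nat)
  (c : nat -> algC) :
  (forall i (z : int), a - g i != z%:~R) -> supported_below d c ->
  (forall j, shift_iter a g k c j = 0) -> forall j, c j = 0.
Proof.
move=> hz; elim: k c => [|k IH] c hc //= h.
apply: (shift_coef_inj (hz k) hc).
exact: IH (shift_coef_supported _ _ hc) h.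
Qed.

Lemma sum_binseries_shift_iter (d m k B : nat) (c : nat -> nat -> algC)
    (a : nat -> algC) (g : nat -> algC) :
  (forall t, (t < m)%N -> supported_below d (c t)) ->
  (forall n, (n < B + k)%N -> \sum_(t < m) binseries d (c t) (a t) n = 0) ->
  forall n, (n < B)%N ->
    \sum_(t < m) binseries d (shift_iter (a t) g k (c t)) (a t) n = 0.
Proof.
elim: k c => [|k IH] c hc hs n hn /=; first by apply: hs; rewrite addn0.
apply: (IH (fun t => shift_coef (a t) (g k) (c t))) => //.
  by move=> t ht; apply/shift_coef_supported/hc.
move=> n' hn'; rewrite (eq_bigr (fun t : 'I_m =>
   (n'.+1)%:R * binseries d (c t) (a t) n'.+1 +
   (n'%:R - g k) * binseries d (c t) (a t) n')); last first.
  by move=> t _; rewrite binseries_shift //; apply: hc.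
by rewrite big_split /= -!mulr_sumr !hs ?mulr0 ?addr0 // ?addnS // ltnW // addnS.
Qed.

(* A single binomial series with d coefficients is determined by its first d
   values: the system is unitriangular. *)
Lemma binseries_triangular (d : nat) (c : nat -> algC) (a : algC) :
  (forall n, (n < d)%N -> binseries d c a n = 0) ->
  forall j, (j < d)%N -> c j = 0.
Proof.
move=> h; elim/ltn_ind => j IH hj.
have := h j hj; rewrite /binseries (bigD1 (Ordinal hj)) //= subrr /= binC0.
rewrite mulr1 big1 ?addr0 // => i /= hij.
case: (ltngtP i j) => hlt.
- by rewrite IH ?mul0r // (ltn_trans hlt).
- by rewrite binZ_neg ?mulr0 // subr_lt0 ltz_nat.
- by move: hij; rewrite -val_eqE /= hlt eqxx.
Qed.

(* The last family is annihilated by d shifts with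
   g = a_{m} + i, which act injectively on the other families. *)
Lemma binseries_indep (d m : nat) (c : nat -> nat -> algC) (a : nat -> algC) :
  (forall t, (t < m)%N -> supported_below d (c t)) ->
  (forall t t' (z : int), (t < m)%N -> (t' < m)%N -> t != t' ->
     a t - a t' != z%:~R) ->
  (forall n, (n < d * m.+1)%N -> \sum_(t < m) binseries d (c t) (a t) n = 0) ->
  forall t j, (t < m)%N -> c t j = 0.
Proof.
elim: m c a => [|m IH] c a hc ha hs t j ht //.
pose g i := a m + i%:R.
pose c' t := shift_iter (a t) g d (c t).
have hs' n : (n < d * m.+1)%N -> \sum_(t < m) binseries d (c' t) (a t) n = 0.
  move=> hn; have := @sum_binseries_shift_iter d m.+1 d (d * m.+1) c a g hc _ n hn.
  rewrite big_ord_recr /= [binseries _ (c' m) _ _]binseries0 ?addr0; last first.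
    by apply: shift_iter_kill => //; apply: hc.
  by apply => n' hn'; apply: hs; rewrite mulnS addnC.
have earlier t' j' : (t' < m)%N -> c t' j' = 0.
  move=> ht'; apply: (shift_iter_inj (a := a t') (g := g) (k := d)).
  - move=> i z; apply/negP => /eqP h.
    have := ha t' m (z + i%:Z) (ltn_trans ht' (ltnSn m)) (ltnSn m).
    rewrite ltn_eqF // => /(_ erefl) /negP; apply; apply/eqP.
    by rewrite intrD -h /g -pmulrn; ring.
  - exact/hc/ltnW.
  - move=> j''; apply: (IH c' a) => //.
    + by move=> t'' ht''; apply/shift_iter_supported/hc/ltnW.
    + by move=> t1 t2 z h1 h2 h12; apply: ha => //; apply: ltnW.
move: ht; rewrite ltnS leq_eqVlt => /orP [/eqP ->|]; last exact: earlier.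
case: (ltnP j d) => hj; last exact: hc.
apply: (binseries_triangular (d := d) (a := a m)) => // n hn.
have := hs n (leq_trans hn (leq_pmulr _ (ltn0Sn _))).
rewrite big_ord_recr /= big1 ?add0r // => t' _.
by apply: binseries0 => j'; apply: earlier.
Qed.

Lemma free_rows_solvable (I : finType) (n : nat) (v : I -> 'rV[algC]_n) :
  (forall l : I -> algC, \sum_i l i *: v i = 0 -> forall i, l i = 0) ->
  forall b : I -> algC, exists x : 'cV[algC]_n, forall i, (v i *m x) 0 0 = b i.
Proof.
move=> free b.
pose A := \matrix_(r < #|I|) v (enum_val r).
have /row_freeP [B AB] : row_free A.
  apply: inj_row_free => u uA0; apply/rowP => r; rewrite mxE -(enum_valK r).
  apply: (free (fun i => u 0 (enum_rank i))); apply: etrans uA0.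
  rewrite mulmx_sum_row (reindex (@enum_rank I)) /=; last first.
    by exists enum_val => r' _; rewrite ?enum_valK ?enum_rankK.
  by apply: eq_bigr => i _; rewrite rowK enum_rankK.
exists (B *m \col_(r < #|I|) b (enum_val r)) => i.
have -> : v i = row (enum_rank i) A by rewrite rowK enum_rankK.
by rewrite -row_mul mulmxA AB mul1mx !mxE enum_rankK.
Qed.

Section SubspaceO.
Variables (N : int) (Q : rat) (q : int).

Lemma inO_ext (f g : laurent) : inO N Q q f -> g =1 f -> inO N Q q g.
Proof.
case=> n [c [g' [gen fE]]] gf; exists n, c, g'; split => // e.
by rewrite gf fE.
Qed.

Lemma inO_gen (g : laurent) : isGenO N Q q g -> inO N Q q g.
Proof.
move=> hg; exists 1%N, (fun _ => 1), (fun _ => g); split => // e.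
by rewrite big_ord1 mul1r.
Qed.

Lemma inO_0 : inO N Q q (fun _ => 0).
Proof.
by exists 0%N, (fun _ => 0), (fun _ _ => 0); split => // e; rewrite big_ord0.
Qed.

Lemma inO_add (f g : laurent) :
  inO N Q q f -> inO N Q q g -> inO N Q q (fun e => f e + g e).
Proof.
case=> n1 [c1 [g1 [gen1 fE]]] [n2 [c2 [g2 [gen2 gE]]]].
exists (n1 + n2)%N, (fun k => if (k < n1)%N then c1 k else c2 (k - n1)%N),
  (fun k => if (k < n1)%N then g1 k else g2 (k - n1)%N); split.
  move=> k hk; case: ifP => hk1; first exact: gen1.
  by apply: gen2; rewrite ltn_subLR // leqNgt hk1.
move=> e; rewrite big_split_ord /= fE gE; congr (_ + _).
  by apply: eq_bigr => i _ /=; rewrite ltn_ord.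
by apply: eq_bigr => i _ /=; rewrite ltnNge leq_addr /= addKn.
Qed.

Lemma inO_scale (a : algC) (f : laurent) :
  inO N Q q f -> inO N Q q (fun e => a * f e).
Proof.
case=> n [c [g [gen fE]]]; exists n, (fun k => a * c k), g; split => // e.
by rewrite fE mulr_sumr; apply: eq_bigr => i _; rewrite mulrA.
Qed.

Lemma inO_sum (n : nat) (F : nat -> laurent) :
  (forall i, (i < n)%N -> inO N Q q (F i)) ->
  inO N Q q (fun e => \sum_(i < n) F i e).
Proof.
elim: n => [|n IH] h.
  by apply: (inO_ext inO_0) => e; rewrite big_ord0.
apply: (inO_ext (inO_add (IH (fun i hi => h i (ltnW hi))) (h n (ltnSn n)))).
by move=> e; rewrite big_ord_recr.
Qed.

End SubspaceO.

Lemma gpoly_high (N : int) (Q : rat) (q j e : int) :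
  N < e -> gpoly N Q q j e = 0.
Proof.
move=> he; rewrite /gpoly; case: ifP => // h0.
apply: big1 => i _; rewrite /mono.
have hi : (i : int) <= N - q - j.
  have := ltn_ord i; rewrite ltnS => hi.
  have : Posz (absz (N - q - j)%R) = N - q - j by rewrite gez0_abs.
  lia.
have -> : (e == i%:Z + q + j) = false by apply/negP => /eqP; lia.
by rewrite mulr0.
Qed.

Lemma gpoly_low (N : int) (Q : rat) (q : int) (j p : nat) :
  gpoly N Q q (N - j%:Z - q) (N - p%:Z) =
  if (p <= j)%N then binC (ratr Q) (j - p) else 0.
Proof.
rewrite /gpoly.
have -> : N - q - (N - j%:Z - q) = j%:Z by ring.
rewrite lez_nat /=.
have monoE (i : nat) :
  (N - p%:Z == i%:Z + q + (N - j%:Z - q)) = (i + p == j)%N.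
  by apply/eqP/eqP; lia.
case: leqP => hpj.
  rewrite (bigD1 (Ordinal (leq_ltn_trans (leq_subr p j) (ltnSn j)))) //=.
  rewrite /mono monoE subnK // eqxx mulr1 binomQE big1 ?addr0 // => i hi.
  rewrite monoE; case: eqP => [h|]; last by rewrite mulr0.
  by move: hi; rewrite -val_eqE /= => /eqP hne; exfalso; apply: hne; lia.
apply: big1 => i _; rewrite /mono monoE.
by case: eqP => [h|]; [have := ltn_ord i; lia | rewrite mulr0].
Qed.

Lemma window_monomials (M : nat) (N e : int) (u : int -> algC) :
  \sum_(i < M) u (N + 1 + i%:Z) * mono (N + 1 + i%:Z) e =
  if (N < e) && (e <= N + M%:Z) then u e else 0.
Proof.
case: ifP => he.
  have hi : (absz (e - N - 1)%R < M)%N by move/andP: he => [h1 h2]; lia.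
  rewrite (bigD1 (Ordinal hi)) //= big1 ?addr0.
    have -> : N + 1 + (absz (e - N - 1)%R)%:Z = e.
      by move/andP: he => [h1 h2]; lia.
    by rewrite /mono eqxx mulr1.
  move=> i hne; rewrite /mono; case: eqP => [h|]; last by rewrite mulr0.
  by move: hne; rewrite -val_eqE /= => /eqP hne; exfalso; apply: hne; lia.
apply: big1 => i _; rewrite /mono; case: eqP => [h|]; last by rewrite mulr0.
have hi := ltn_ord i; move/negP: he => he; exfalso; apply: he; apply/andP; lia.
Qed.

(* With a = -Q these functionals are dual to the generators of
   O(N,Q,q;z). *)
Definition dual_coef (N : int) (a : algC) (W : nat) (h : laurent) (j : nat)
  : algC :=
  \sum_(n < W.+1) h (N - n%:Z) * binZ a (n%:Z - j%:Z).

Lemma dual_expansion (N : int) (Q : rat) (q : int) (W : nat) (h : laurent)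
  (p : nat) : (forall k, k < N - W%:Z -> h k = 0) ->
  h (N - p%:Z) = \sum_(j < W.+1)
    dual_coef N (- ratr Q) W h j * gpoly N Q q (N - j%:Z - q) (N - p%:Z).
Proof.
move=> hlow.
under eq_bigr do rewrite gpoly_low /dual_coef mulr_suml.
rewrite exchange_big /=.
under eq_bigr => n _.
  rewrite (eq_bigr (fun j : 'I_W.+1 => h (N - n%:Z) *
     (if (p <= j)%N then binZ (- ratr Q) (n%:Z - j%:Z) * binC (ratr Q) (j - p)
      else 0))); last first.
    by move=> j _; case: ifP => _; [rewrite mulrA | rewrite !mulr0].
  rewrite -mulr_sumr binZ_inverse //.
  over.
case: (ltnP p W.+1) => hpW.
  rewrite (bigD1 (Ordinal hpW)) //= eqxx mulr1 big1 ?addr0 // => i.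
  by rewrite -val_eqE /= => /negbTE ->; rewrite mulr0.
rewrite hlow; last by lia.
by rewrite big1 // => i _; rewrite ltn_eqF ?mulr0 // (leq_trans (ltn_ord i)).
Qed.

(* Its part
   above N is a combination of monomials and its part below N, by
   dual_expansion, a combination of the generators g_{N-q-j} with j >= N - q. *)
Lemma inO_of_dual_vanish (N : int) (Q : rat) (q : int) (W : nat) (h : laurent) :
  is_laurent h -> (forall k, k < N - W%:Z -> h k = 0) ->
  (forall j : nat, j%:Z < N - q -> dual_coef N (- ratr Q) W h j = 0) ->
  inO N Q q h.
Proof.
case=> M hM hlow hdual.
pose M1 := (M + absz N)%N.
have above : inO N Q q
    (fun e => \sum_(i < M1) h (N + 1 + i%:Z) * mono (N + 1 + i%:Z) e).
  apply: (inO_sum (F := fun i e => h (N + 1 + i%:Z) * mono (N + 1 + i%:Z) e)).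
  move=> i _; apply/inO_scale/inO_gen; left.
  by exists (N + 1 + i%:Z); split => //; lia.
have below : inO N Q q (fun e => \sum_(j < W.+1)
    dual_coef N (- ratr Q) W h j * gpoly N Q q (N - j%:Z - q) e).
  apply: (inO_sum (F := fun j e =>
    dual_coef N (- ratr Q) W h j * gpoly N Q q (N - j%:Z - q) e)) => j _.
  case: (lerP (N - j%:Z - q) 0) => hj.
    by apply/inO_scale/inO_gen; right; exists (N - j%:Z - q).
  rewrite hdual; last by lia.
  by apply: (inO_ext (inO_0 N Q q)) => e; rewrite mul0r.
apply: (inO_ext (inO_add above below)) => e /=.
rewrite window_monomials.
case: (ltrP N e) => hNe /=.
  rewrite big1 ?addr0; last by move=> j _; rewrite gpoly_high ?mulr0.
  case: ifP => // he; apply: hM.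
  by move/negbT: he; rewrite -ltNge => he; lia.
have -> : e = N - (absz (N - e)%R)%:Z by lia.
by rewrite add0r -dual_expansion.
Qed.

Definition dual_row (W : nat) (a : algC) (j : nat) : 'rV[algC]_W.+1 :=
  \row_(n < W.+1) binZ a (n%:Z - j%:Z).

(* The rows for m+1 parameters that are pairwise incongruent modulo Z, with
   d+1 rows per parameter, are linearly independent once the window is long
   enough: this is binseries_indep read column by column. *)
Lemma dual_rows_free (m d W : nat) (a : 'I_m.+1 -> algC) :
  (forall s t (z : int), s != t -> a s - a t != z%:~R) ->
  (d.+1 * m.+2 <= W.+1)%N ->
  forall l : 'I_m.+1 * 'I_d.+1 -> algC,
    \sum_i l i *: dual_row W (a i.1) i.2 = 0 -> forall i, l i = 0.
Proof.
move=> ha hW l hl.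
pose c (t j : nat) := if (j < d.+1)%N then l (inord t, inord j) else 0.
pose a' (t : nat) := a (inord t).
have hsum n : (n < d.+1 * m.+2)%N ->
    \sum_(t < m.+1) binseries d.+1 (c t) (a' t) n = 0.
  move=> hn; have hnW : (n < W.+1)%N by exact: leq_trans hn hW.
  have := congr1 (fun A : 'rV_W.+1 => A 0 (Ordinal hnW)) hl.
  rewrite summxE [in RHS]mxE => hl0; apply: (etrans _ hl0).
  rewrite (eq_bigr (fun t : 'I_m.+1 => \sum_(j < d.+1)
      (l (t, j) *: dual_row W (a t) j) 0 (Ordinal hnW))); last first.
    move=> t _; rewrite /binseries; apply: eq_bigr => j _.
    by rewrite /c ltn_ord !inord_val !mxE /a' inord_val.
  by rewrite pair_big /=; apply: eq_bigr => [[t j]] _.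
have c0 := @binseries_indep d.+1 m.+1 c a'.
move=> [s j]; have := c0 _ _ _ s j (ltn_ord s); rewrite /c ltn_ord !inord_val.
apply => //.
- by move=> t _ j' hj'; rewrite /c ltnNge hj'.
- move=> t t' z ht ht' htt'; apply: ha.
  apply/negP => /eqP /(congr1 val); rewrite /= !inordK // => htt.
  by move: htt'; rewrite htt eqxx.
Qed.

(* The Laurent polynomial with coefficient x_n at z^{N-n}, n <= W. *)
Definition window_laurent (N : int) (W : nat) (x : 'cV[algC]_W.+1) : laurent :=
  fun k => if (N - W%:Z <= k) && (k <= N) then x (inord (absz (N - k)%R)) 0
           else 0.

Lemma window_laurent_out (N : int) (W : nat) (x : 'cV[algC]_W.+1) (k : int) :
  (k < N - W%:Z) \/ (N < k) -> window_laurent N x k = 0.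
Proof. by move=> hk; rewrite /window_laurent; case: ifP => // /andP [? ?]; lia. Qed.

Lemma dual_coef_window (N : int) (a : algC) (W : nat) (x : 'cV[algC]_W.+1)
  (j : nat) : dual_coef N a W (window_laurent N x) j = (dual_row W a j *m x) 0 0.
Proof.
rewrite mxE; apply: eq_bigr => n _.
have hn : (N - W%:Z <= N - n%:Z) && (N - n%:Z <= N).
  by have := ltn_ord n; move=> hn; apply/andP; lia.
rewrite /window_laurent hn mxE mulrC.
have -> : absz (N - (N - n%:Z))%R = n by lia.
by rewrite inord_val.
Qed.

Lemma dual_coefB (N : int) (a : algC) (W : nat) (f g : laurent) (j : nat) :
  dual_coef N a W (lsub f g) j = dual_coef N a W f j - dual_coef N a W g j.
Proof. by rewrite /dual_coef -sumrB; apply: eq_bigr => n _; rewrite mulrBl. Qed.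

Lemma is_laurent_common_bound (I : finType) (fs : I -> laurent) :
  (forall s, is_laurent (fs s)) ->
  exists M : nat, forall s e, (M < `|e|)%N -> fs s e = 0.
Proof.
move=> hfs; have [Mf hMf] := fin_all_exists hfs.
exists (\sum_s Mf s)%N => s e he; apply: hMf.
by apply: leq_ltn_trans he; rewrite (bigD1 s) //= leq_addr.
Qed.

(* Surjectivity for m+1 summands: solve the finite linear system
   dual_coef_{s,j}(f) = dual_coef_{s,j}(fs s) (s <= m, j <= d) for f in a
   window [N-W, N] wide enough to contain all fs s below N; then
   inO_of_dual_vanish applies to each f - fs s. *)
Lemma diagonal_surjective (m : nat) (N : int) (q : 'I_m.+1 -> int)
  (Q : 'I_m.+1 -> rat)
  (hQ : forall i j : 'I_m.+1, i != j -> ~ exists z : int, Q i - Q j = z%:~R)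
  (fs : 'I_m.+1 -> laurent) (hfs : forall s, is_laurent (fs s)) :
  exists f : laurent, is_laurent f /\
    forall s : 'I_m.+1, inO N (Q s) (q s) (lsub f (fs s)).
Proof.
have [M hM] := is_laurent_common_bound hfs.
pose d := (\sum_s absz (N - q s)%R)%N.
have hd s : N - q s <= d%:Z.
  have : (absz (N - q s)%R <= d)%N by rewrite /d (bigD1 s) //= leq_addr.
  by lia.
pose W := (absz N + M + d.+1 * m.+2)%N.
pose a s := - ratr (Q s) : algC.
have ha s t (z : int) : s != t -> a s - a t != z%:~R.
  move=> st; apply/negP => /eqP h; apply: (hQ t s); first by rewrite eq_sym.
  exists z; apply: (fmorph_inj (ratr : rat -> algC)).
  by rewrite rmorphB rmorph_int -h /a; ring.
have hW : (d.+1 * m.+2 <= W.+1)%N by rewrite /W; lia.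
have [x hx] := free_rows_solvable (dual_rows_free ha hW)
  (fun i => dual_coef N (a i.1) W (fs i.1) i.2).
exists (window_laurent N x); split.
  by exists (absz N + W)%N => k hk; apply: window_laurent_out; lia.
move=> s; apply: (inO_of_dual_vanish (W := W)).
- exists (absz N + W + M)%N => e he.
  by rewrite /lsub window_laurent_out ?hM ?subr0 //; lia.
- by move=> k hk; rewrite /lsub window_laurent_out ?hM ?subr0 //; lia.
- move=> j hj; have hjd : (j < d.+1)%N by have := hd s; lia.
  by rewrite dual_coefB dual_coef_window (hx (s, Ordinal hjd)) subrr.
Qed.

Theorem mainTheorem5 (T : nat) (hT : (0 < T)%N) (N : int)
  (q : 'I_T -> int) (Q : 'I_T -> rat)
  (hQ : forall i j : 'I_T, i != j -> ~ exists z : int, Q i - Q j = z%:~R) :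
  (* well defined and injective: [f] = [g] in the source iff all components agree *)
  (forall f g : laurent, is_laurent f -> is_laurent g ->
     (inBigcapO N Q q (lsub f g) <->
      forall s : 'I_T, inO N (Q s) (q s) (lsub f g))) /\
  (* surjective *)
  (forall fs : 'I_T -> laurent, (forall s, is_laurent (fs s)) ->
     exists f : laurent, is_laurent f /\
       forall s : 'I_T, inO N (Q s) (q s) (lsub f (fs s))).
Proof.
split.
  by move=> f g _ _; split.
case: T hT q Q hQ => // m _ q Q hQ fs hfs.
exact: diagonal_surjective.
Qed.
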